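(* Let $p\geq 1$. For any $y^1,y^2\in D(\mathbb{R}^+,\mathbb{R})$ and any $T\in\mathbb{R}^+$, \[ v_p\Big(\sup_{s\leq\cdot}y^1_s-\sup_{s\leq\cdot}y^2_s\Big)_T\leq v_p(y^1-y^2)_T . \]
   Context: $\mathbb{R}^+=[0,\infty)$. $D(\mathbb{R}^+,\mathbb{R}^m)$ denotes the space of càdlàg functions $x:\mathbb{R}^+\to\mathbb{R}^m$ (right-continuous with left limits). For $x\in D(\mathbb{R}^+,\mathbb{R}^m)$ and $a<b$, $v_p(x)_{[a,b]}=\sup_\pi\sum_{i=1}^n|x_{t_i}-x_{t_{i-1}}|^p$, the supremum being over all subdivisions $\pi=\{a=t_0<\dots<t_n=b\}$, with $|\cdot|$ the Euclidean norm; $v_p(x)_T=v_p(x)_{[0,T]}$. The function $\sup_{s\leq\cdot}y_s$ is $t\mapsto\sup_{s\leq t}y_s$. *)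

From HB Require Import structures.
From mathcomp Require Import all_boot all_order all_algebra.
From mathcomp Require Import all_classical all_reals all_analysis.
Set Implicit Arguments. Unset Strict Implicit. Unset Printing Implicit Defensive.
Import Order.TTheory GRing.Theory Num.Theory.
Import numFieldNormedType.Exports.
Local Open Scope classical_set_scope.
Local Open Scope ring_scope.

(* Càdlàg on R^+ = [0,oo): functions R -> R whose values at negative
   times are irrelevant; right-continuous at every t >= 0 and having a
   (finite) left limit at every t > 0. *)
Definition cadlag (R : realType) (x : R -> R) : Prop :=
  (forall t : R, 0 <= t -> x x0 @[x0 --> t^'+] --> x t) /\
  (forall t : R, 0 < t -> cvg (x x0 @[x0 --> t^'-])).

Definition subdivision (R : realType) (a b : R) (n : nat) (t : nat -> R) : Prop :=
  t 0%N = a /\ t n = b /\ (forall i : nat, (i < n)%N -> t i < t i.+1).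

Definition pvar (R : realType) (p : R) (x : R -> R) (a b : R) : \bar R :=
  ereal_sup [set e | exists (n : nat) (t : nat -> R),
     subdivision a b n t /\
     e = (\sum_(i < n) `|x (t i.+1) - x (t i)| `^ p)%:E]%classic.

Definition pvarT (R : realType) (p : R) (x : R -> R) (T : R) : \bar R :=
  pvar p x 0 T.

Definition runsup (R : realType) (y : R -> R) : R -> R :=
  fun t => sup [set y s | s in `[0, t]%classic].

From HB Require Import structures.
From mathcomp Require Import all_boot all_order all_algebra.
From mathcomp Require Import all_classical all_reals all_analysis.
From mathcomp Require Import lra.
Import Order.TTheory GRing.Theory Num.Theory.
Import numFieldNormedType.Exports.
Local Open Scope classical_set_scope.
Local Open Scope ring_scope.

(* Write [Z = M1 - M2] for the difference of the running suprema and [D = y1 - y2].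
   If [Z] increases between two partition points then so does [M1], whose new value is
   almost attained by [y1] at some intermediate time [u]; as [y2 u <= M2], [Z] is then
   almost below [D u]; decreases are symmetric. Merging consecutive steps of [Z] in the
   same direction only increases [sum |dZ| ^ p] (superadditivity of [x ^ p], [p >= 1]),
   and between the witness times at the ends of consecutive monotone runs [D] moves by
   at least the size of the run minus [2 eps]. With [eps] small compared with the
   smallest nonzero step this gives [c ^ p * sum |dZ| ^ p <= v_p(D)] for every [c < 1]. *)

Lemma ge1_ler_powRD (R : realType) (p x y : R) : 1 <= p -> 0 <= x -> 0 <= y ->
  x `^ p + y `^ p <= (x + y) `^ p.
Proof.
move=> p_ge1 x0 y0; have p_neq0 : p != 0 by rewrite gt_eqF // (lt_le_trans ltr01).
have [->|x_neq0] := eqVneq x 0; first by rewrite powR0 // !add0r.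
have S_gt0 : 0 < x + y by rewrite ltr_wpDr // lt_neqAle eq_sym x_neq0.
have scale u : 0 <= u <= 1 -> (u * (x + y)) `^ p <= u * (x + y) `^ p.
  case/andP => u0 u1; have [->|u_neq0] := eqVneq u 0; first by rewrite !mul0r powR0.
  by apply: ge1r_powRZ; rewrite ?(ltW S_gt0) // lt_neqAle eq_sym u_neq0 u0.
have frac v : 0 <= v -> v <= x + y -> 0 <= v / (x + y) <= 1.
  by move=> v0 vS; rewrite divr_ge0 ?(ltW S_gt0) //= ler_pdivrMr // mul1r.
have xS : x <= x + y by rewrite lerDl.
have yS : y <= x + y by rewrite lerDr.
have := lerD (scale _ (frac x x0 xS)) (scale _ (frac y y0 yS)).
by rewrite !divfK ?gt_eqF // -mulrDl -mulrDl divff ?gt_eqF // mul1r.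
Qed.

Lemma subdivision_le {R : realType} {a b : R} {n} {t : nat -> R} :
  subdivision a b n t -> forall i j, (i <= j <= n)%N -> t i <= t j.
Proof.
move=> [_ [_ t_lt]].
have t_le : {in [pred i | (i <= n)%N] &, {homo t : i j / (i <= j)%N >-> i <= j}}.
  apply: Order.NatMonotonyTheory.nondecn_inP => [i j _ jn k /andP[_ kj]|i _ iSn].
    by rewrite inE (leq_trans (ltnW kj)).
  exact/ltW/t_lt.
by move=> i j /andP[ij jn]; apply: t_le; rewrite ?inE // (leq_trans ij).
Qed.

Lemma sum_le_pvar (R : realType) (p : R) (x : R -> R) (a b : R) r (u : nat -> R) :
  u 0%N = a -> (forall i, (i < r)%N -> u i < u i.+1) -> u r <= b ->
  ((\sum_(i < r) `|x (u i.+1) - x (u i)| `^ p)%:E <= pvar p x a b)%E.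
Proof.
move=> u0 u_incr; rewrite le_eqVlt => /predU1P[ur|ur].
  by apply: ereal_sup_ubound; exists r, u.
pose v i := if (i <= r)%N then u i else b.
have v_sub : subdivision a b r.+1 v.
  split; first by rewrite /v leq0n.
  split; first by rewrite /v ltnn.
  move=> i; rewrite ltnS leq_eqVlt /v => /orP[/eqP ->|ir]; first by rewrite leqnn ltnn.
  by rewrite ir (ltnW ir) u_incr.
apply: (@le_trans _ _ (\sum_(i < r.+1) `|x (v i.+1) - x (v i)| `^ p)%:E).
  rewrite lee_fin big_ord_recr /=.
  under [X in _ <= X + _]eq_bigr => i _ do rewrite /v ltn_ord (ltnW (ltn_ord i)).
  by rewrite lerDl powR_ge0.
by apply: ereal_sup_ubound; exists r.+1, v.
Qed.

Lemma lee_powR_scale (R : realType) (p S : R) (V : \bar R) : 0 < p -> 0 <= S ->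
  (forall c, 0 <= c < 1 -> ((c `^ p * S)%:E <= V)%E) -> (S%:E <= V)%E.
Proof.
move=> p_gt0 S0 scaled; apply/lee_mul01Pr; first by rewrite lee_fin.
move=> lam /andP[lam_gt0 lam_lt1]; rewrite -EFinM.
have root_pow : (lam `^ p^-1) `^ p = lam.
  by rewrite -powRrM mulVf ?gt_eqF // powRr1 // ltW.
rewrite -{1}root_pow; apply: scaled; rewrite powR_ge0 /=.
have pinv_gt0 : 0 < p^-1 by rewrite invr_gt0.
have := @gt0_ltr_powR _ _ pinv_gt0 lam 1.
by rewrite !nnegrE powR1 => /(_ (ltW lam_gt0) ler01 lam_lt1).
Qed.

Lemma exists_lb_nonzero_norm (R : realType) n (f : nat -> R) :
  exists2 m : R, 0 < m & forall j, (j < n)%N -> f j != 0 -> m <= `|f j|.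
Proof.
elim: n => [|n [m m0 m_le]]; first by exists 1.
have [fn0|fn_neq0] := eqVneq (f n) 0.
  exists m => // j; rewrite ltnS leq_eqVlt => /orP[/eqP ->|]; [by rewrite fn0 eqxx | exact: m_le].
exists (Num.min m `|f n|); first by rewrite lt_min m0 normr_gt0.
move=> j; rewrite ltnS leq_eqVlt => /orP[/eqP -> _|jn fj]; first by rewrite ge_min lexx orbT.
by rewrite ge_min m_le.
Qed.

Section OneSidedNeighbourhoods.
Context {R : realType}.

Lemma near_right_itv {t : R} {P : R -> Prop} :
  (\forall x \near t^'+, P x) -> exists2 d : R, 0 < d & forall x, t < x < t + d -> P x.
Proof.
case=> d /= d0 Pd; exists d => // x /andP[tx xd]; apply: Pd => //=.
by rewrite distrC ger0_norm ?subr_ge0 ?ltW //; lra.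
Qed.

Lemma near_left_itv {t : R} {P : R -> Prop} :
  (\forall x \near t^'-, P x) -> exists2 d : R, 0 < d & forall x, t - d < x < t -> P x.
Proof.
case=> d /= d0 Pd; exists d => // x /andP[tx xt]; apply: Pd => //=.
by rewrite ger0_norm ?subr_ge0 ?ltW //; lra.
Qed.

End OneSidedNeighbourhoods.

Section RunningSup.
Context {R : realType} {y : R -> R}.
Hypothesis y_cadlag : cadlag y.

(* The set of [s] such that [y] is bounded above on [[0, s]] contains its supremum
   (left limits) and cannot stop before [t] (right continuity). *)
Lemma cadlag_bounded_above {t} : 0 <= t -> exists B, forall s, 0 <= s <= t -> y s <= B.
Proof.
move: y_cadlag => [y_right y_left] t0.
pose bdd s := exists B, forall u, 0 <= u <= s -> y u <= B.
pose S := [set s | 0 <= s <= t /\ bdd s].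
have S0 : S 0.
  split; first by rewrite lexx t0.
  by exists (y 0) => u /andP[u0 u1]; rewrite (@le_anti _ _ u 0) ?u0 ?u1.
have supS : has_sup S by split; [exists 0 | exists t => s [/andP[]]].
pose sg := sup S.
have sg0 : 0 <= sg by apply: sup_upper_bound.
have sgt : sg <= t by apply: ge_sup; [exists 0 | move=> s [/andP[]]].
have [B yB] : bdd sg.
  case: (ltrgt0P sg) sg0 => [sg_gt0 _| //| ->]; last by case: S0.
  set l := lim (y x @[x --> sg^'-]).
  have [d d0 yl] :=
    near_left_itv (cvgr_le _ (y_left _ sg_gt0) (l + 1) (ltr_pwDr ltr01 (lexx l))).
  have [s [/andP[s0 st] [Bs yBs]]] := sup_adherent d0 supS; rewrite -/sg => sgs.
  exists (Num.max Bs (Num.max (l + 1) (y sg))) => u /andP[u0 usg].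
  rewrite !le_max; have [us|su] := leP u s; first by rewrite yBs ?u0.
  have [usg'|] := ltP u sg; first by rewrite yl ?orbT //; apply/andP; split; lra.
  by move=> sgu; rewrite (@le_anti _ _ u sg) ?usg ?sgu // lexx !orbT.
suff t_le_sg : t <= sg by exists B => s /andP[s0 st]; rewrite yB // s0 (le_trans st).
rewrite leNgt; apply/negP => sg_lt_t.
have [d d0 yr] := near_right_itv
  (cvgr_le _ (y_right _ sg0) (y sg + 1) (ltr_pwDr ltr01 (lexx _))).
pose s' := Num.min (sg + d / 2) t.
have : S s'.
  split; first by rewrite le_min ge_min lexx orbT andbT; apply/andP; split; lra.
  exists (Num.max B (y sg + 1)) => u /andP[u0 us']; rewrite le_max.
  have [usg|sgu] := leP u sg; first by rewrite yB ?u0.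
  rewrite yr ?orbT // sgu /=; apply: le_lt_trans us' _.
  by rewrite gt_min; apply/orP; left; lra.
move=> /(sup_upper_bound supS); rewrite -/sg ge_min => /orP[]; lra.
Qed.

Lemma runsup0 : runsup y 0 = y 0.
Proof.
rewrite /runsup (_ : [set y s | s in _] = [set y 0]) ?sup1 //.
apply/seteqP; split => [_ [s /= + <-]|_ ->]; last by exists 0; rewrite //= in_itv /= lexx.
by rewrite in_itv /= => s0; rewrite (@le_anti _ _ s 0) // andbC.
Qed.

Lemma has_sup_runsup {t} : 0 <= t -> has_sup [set y s | s in `[0, t]].
Proof.
move=> t0; have [B yB] := cadlag_bounded_above t0.
split; first by exists (y 0), 0; rewrite //= in_itv /= lexx t0.
by exists B => _ [s /= + <-]; rewrite in_itv /=; apply: yB.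
Qed.

Lemma runsup_ub {t s} : 0 <= s <= t -> y s <= runsup y t.
Proof.
move=> /andP[s0 st]; apply: sup_upper_bound; first exact/has_sup_runsup/(le_trans s0).
by exists s; rewrite //= in_itv /= s0.
Qed.

Lemma runsup_le {s t} : 0 <= s -> s <= t -> runsup y s <= runsup y t.
Proof.
move=> s0 st; apply: ge_sup; first by exists (y 0), 0; rewrite //= in_itv /= lexx.
by move=> _ [u /= + <-]; rewrite in_itv /= => /andP[u0 us]; rewrite runsup_ub ?u0 ?(le_trans us).
Qed.

Lemma runsup_lt_approx {s t e} : 0 <= s -> s <= t -> 0 < e -> runsup y s < runsup y t ->
  exists u, s < u <= t /\ runsup y t - e < y u.
Proof.
move=> s0 st e0 lt_st.
pose e' := Num.min e (runsup y t - runsup y s).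
have e'_gt0 : 0 < e' by rewrite lt_min e0 subr_gt0.
have e'_le : e' <= e /\ e' <= runsup y t - runsup y s by split; rewrite ge_min lexx ?orbT.
have [_ [u /= + <-]] := sup_adherent e'_gt0 (has_sup_runsup (le_trans s0 st)).
rewrite in_itv /= -/(runsup y t) => /andP[u0 ut] ltu; exists u; split; last lra.
rewrite ut andbT ltNge; apply/negP => us.
have := @runsup_ub s u; rewrite u0 us => /(_ isT); lra.
Qed.

End RunningSup.

Section MonotoneRuns.
Context {R : realType}.
Variables (p c eps : R) (z e : nat -> R) (N : nat).
Hypotheses (p_ge1 : 1 <= p) (c_ge0 : 0 <= c) (c_le1 : c <= 1).
Hypothesis step_large :
  forall j, (j < N)%N -> z j.+1 != z j -> 2 * eps <= (1 - c) * `|z j.+1 - z j|.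
Hypothesis start_close : `|e 0%N - z 0%N| <= eps.
Hypothesis up_close : forall j, (j < N)%N -> z j < z j.+1 -> z j.+1 - e j.+1 <= eps.
Hypothesis down_close : forall j, (j < N)%N -> z j.+1 < z j -> e j.+1 - z j.+1 <= eps.

Local Notation zsum n := (\sum_(j < n) `|z j.+1 - z j| `^ p).
Local Notation esum r k := (\sum_(i < r) `|e (k i.+1) - e (k i)| `^ p).
Local Notation sign s := (s = 1 :> R \/ s = -1).

Let powR0p : 0 `^ p = 0.
Proof. by rewrite powR0 // gt_eqF // (lt_le_trans ltr01). Qed.

Lemma sign_le_norm s x : sign s -> s * x <= `|x|.
Proof. by case=> ->; rewrite ?mul1r ?mulN1r ?ler_norm // -normrN ler_norm. Qed.

Lemma sign_norm s x : sign s -> 0 <= s * x -> `|x| = s * x.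
Proof.
case=> -> sx; first by rewrite mul1r ger0_norm // -(mul1r x).
by rewrite mulN1r ler0_norm //; move: sx; rewrite mulN1r; lra.
Qed.

Lemma signN s : sign s -> sign (- s).
Proof. by case=> ->; [right | left; rewrite opprK]. Qed.

(* The endpoints of a run of [z] of direction [s] and size [X >= 2 eps / (1 - c)] are
   matched by values of [e] within [eps], so [e] moves by at least [X - 2 eps >= c X]. *)
Lemma closed_run_bound {s za zb ea eb : R} : sign s ->
  s * (ea - za) <= eps -> s * (zb - eb) <= eps ->
  2 * eps <= (1 - c) * (s * (zb - za)) -> 0 <= s * (zb - za) ->
  c `^ p * (s * (zb - za)) `^ p <= `|eb - ea| `^ p.
Proof.
move=> s_sign anchor_a close_b large run_ge0.
rewrite -powRM //; apply: ge0_ler_powR; rewrite ?nnegrE ?(mulr_ge0 c_ge0) //.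
  exact: le_trans ler01 p_ge1.
by apply: le_trans (sign_le_norm _ _ s_sign); case: s_sign => s_sign; subst s; nra.
Qed.

Lemma close_after_step n s : (n < N)%N -> sign s -> 0 < s * (z n.+1 - z n) ->
  s * (z n.+1 - e n.+1) <= eps.
Proof.
move=> nN; case=> -> step; last by have := down_close _ nN; lra.
by have := up_close _ nN; lra.
Qed.

Definition push_chain r (k : nat -> nat) b i := if (i <= r)%N then k i else b.

Lemma push_chain_incr {r k a b} : (forall i, (i < r)%N -> (k i < k i.+1 <= a)%N) ->
  k r = a -> (a < b)%N ->
  forall i, (i < r.+1)%N -> (push_chain r k b i < push_chain r k b i.+1 <= b)%N.
Proof.
move=> k_incr k_last a_lt_b i; rewrite ltnS leq_eqVlt /push_chain => /orP[/eqP ->|ir].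
  by rewrite ltnn !leqnn k_last a_lt_b.
have /andP[k_lt k_le] := k_incr _ ir.
by rewrite ir (ltnW ir) k_lt (leq_trans k_le (ltnW a_lt_b)).
Qed.

Lemma esum_push r k b : esum r.+1 (push_chain r k b) = esum r k + `|e b - e (k r)| `^ p.
Proof.
rewrite big_ord_recr /push_chain ltnn leqnn /=; congr (_ + _).
by apply: eq_bigr => i _; rewrite ltn_ord (ltnW (ltn_ord i)).
Qed.

(* State after reading [z 0, ..., z n]: the runs closed so far are recorded by the
   chain [k 0 = 0 < ... < k r = a]; the open run starts at [a] with direction [s] and
   [b] is its last time of change. *)
Record run_state (n r : nat) (k : nat -> nat) (a b : nat) (s : R) : Prop := RunState {
  run_sign : sign s;
  run_chain0 : k 0%N = 0%N;
  run_chain_incr : forall i, (i < r)%N -> (k i < k i.+1 <= a)%N;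
  run_chain_last : k r = a;
  run_ab : (a <= b <= n)%N;
  run_last_change : z b = z n;
  run_monotone : 0 <= s * (z b - z a);
  run_anchor : s * (e a - z a) <= eps;
  run_empty : b = a -> `|e a - z a| <= eps;
  run_closing : b != a -> s * (z b - e b) <= eps /\ 2 * eps <= (1 - c) * (s * (z b - z a));
  run_bound : c `^ p * zsum n <= esum r k + c `^ p * (s * (z b - z a)) `^ p }.

Lemma run_state_start : run_state 0 0 (fun=> 0%N) 0 0 1.
Proof.
split; rewrite ?subrr ?mulr0 ?big_ord0 ?powR0p ?mulr0 ?addr0 //; first by left.
by rewrite mul1r (le_trans (ler_norm _)).
Qed.

Lemma run_state_flat {n r k a b s} : (n < N)%N -> z n.+1 = z n ->
  run_state n r k a b s -> run_state n.+1 r k a b s.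
Proof.
move=> nN flat [? ? ? ? /andP[ab bn] last_change ? ? ? ? bound]; split; try assumption.
- by rewrite ab (leq_trans bn).
- by rewrite flat.
- by rewrite big_ord_recr /= flat subrr normr0 powR0p addr0.
Qed.

Lemma run_state_extend {n r k a b s} : (n < N)%N -> 0 < s * (z n.+1 - z n) ->
  run_state n r k a b s -> run_state n.+1 r k a n.+1 s.
Proof.
move=> nN step [s_sign ? ? ? /andP[ab bn] last_change mono ? _ _ bound].
have run_ext : s * (z n.+1 - z a) = s * (z b - z a) + s * (z n.+1 - z n).
  by rewrite -mulrDr last_change; congr (_ * _); lra.
have step_norm := sign_norm _ _ s_sign (ltW step).
have step_ne : z n.+1 != z n by apply/negP => /eqP eq_z; move: step; rewrite eq_z subrr mulr0 ltxx.
split; try assumption.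
- by rewrite leqnn andbT (leq_trans ab (leq_trans bn (leqnSn n))).
- reflexivity.
- lra.
- by move=> na; move: (leq_trans ab bn); rewrite -na ltnn.
- split; first exact: close_after_step.
  have := step_large _ nN step_ne; rewrite step_norm run_ext.
  have : 0 <= (1 - c) * (s * (z b - z a)) by rewrite mulr_ge0 ?subr_ge0.
  lra.
- have superadd := @ge1_ler_powRD R p _ _ p_ge1 mono (ltW step).
  rewrite big_ord_recr /= step_norm run_ext.
  have := ler_wpM2l (powR_ge0 c p) superadd.
  lra.
Qed.

Lemma run_state_reverse {n r k a s} : (n < N)%N -> s * (z n.+1 - z n) < 0 ->
  run_state n r k a a s -> run_state n.+1 r k a n.+1 (- s).
Proof.
move=> nN step [s_sign ? ? ? /andP[_ an] last_change _ _ empty _ bound].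
have ns_sign := signN _ s_sign.
have step' : 0 < - s * (z n.+1 - z n) by rewrite mulNr oppr_gt0.
have step_norm := sign_norm _ _ ns_sign (ltW step').
have step_ne : z n.+1 != z n by apply/negP => /eqP eq_z; move: step; rewrite eq_z subrr mulr0 ltxx.
have e_close := empty erefl.
split; try assumption.
- by rewrite leqnn andbT (leq_trans an (leqnSn n)).
- reflexivity.
- by rewrite last_change; lra.
- exact: le_trans (sign_le_norm _ _ ns_sign) e_close.
- by move=> na; move: an; rewrite -na ltnn.
- split; first exact: close_after_step.
  by have := step_large _ nN step_ne; rewrite step_norm last_change.
- move: bound; rewrite big_ord_recr /= step_norm subrr mulr0 powR0p mulr0 addr0 last_change.
  lra.
Qed.

Lemma run_state_turn {n r k a b s} : (n < N)%N -> s * (z n.+1 - z n) < 0 -> b != a ->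
  run_state n r k a b s -> run_state n.+1 r.+1 (push_chain r k b) b n.+1 (- s).
Proof.
move=> nN step ba [s_sign k0 k_incr k_last /andP[ab bn] last_change mono anchor _ closing bound].
have [close_b large] := closing ba.
have ns_sign := signN _ s_sign.
have step' : 0 < - s * (z n.+1 - z n) by rewrite mulNr oppr_gt0.
have step_norm := sign_norm _ _ ns_sign (ltW step').
have step_ne : z n.+1 != z n by apply/negP => /eqP eq_z; move: step; rewrite eq_z subrr mulr0 ltxx.
have a_lt_b : (a < b)%N by rewrite ltn_neqAle eq_sym ba.
split; try assumption.
- exact: push_chain_incr k_incr k_last a_lt_b.
- by rewrite /push_chain ltnn.
- by rewrite leqnn andbT (leq_trans bn (leqnSn n)).
- reflexivity.
- by rewrite last_change ltW.
- by rewrite mulNr -mulrN opprB.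
- by move=> nb; move: bn; rewrite -nb ltnn.
- split; first exact: close_after_step.
  by have := step_large _ nN step_ne; rewrite step_norm last_change.
- have closed := closed_run_bound s_sign anchor close_b large mono.
  rewrite esum_push k_last big_ord_recr /= step_norm last_change.
  have := ler_wpM2l (powR_ge0 c p) (lexx ((- s * (z n.+1 - z n)) `^ p)).
  lra.
Qed.

Lemma run_state_exists n : (n <= N)%N -> exists r k a b s, run_state n r k a b s.
Proof.
elim: n => [_|n IH nN]; first by exists 0%N, (fun=> 0%N), 0%N, 0%N, 1; exact: run_state_start.
have [r [k [a [b [s st]]]]] := IH (ltnW nN).
have s_sign : sign s by case: st.
case: (ltgtP 0 (s * (z n.+1 - z n))) => [up|down|flat].
- by exists r, k, a, n.+1, s; exact: run_state_extend nN up st.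
- have [ba|ba] := eqVneq b a.
    by subst b; exists r, k, a, n.+1, (- s); exact: run_state_reverse nN down st.
  by exists r.+1, (push_chain r k b), b, n.+1, (- s); exact: run_state_turn nN down ba st.
- exists r, k, a, b, s; apply: run_state_flat nN _ st.
  by case: s_sign flat => ->; lra.
Qed.

Lemma exists_dominated_subchain : exists r (k : nat -> nat),
  [/\ k 0%N = 0%N, forall i, (i < r)%N -> (k i < k i.+1 <= N)%N &
      c `^ p * zsum N <= esum r k].
Proof.
have [r [k [a [b [s st]]]]] := run_state_exists _ (leqnn N).
case: st => s_sign k0 k_incr k_last /andP[ab bN] _ mono anchor _ closing bound.
have [ba|ba] := eqVneq b a.
  exists r, k; split; first exact: k0.
    move=> i ir; have /andP[-> k_le] := k_incr _ ir.
    by rewrite (leq_trans k_le (leq_trans ab bN)).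
  by move: bound; rewrite ba subrr mulr0 powR0p mulr0 addr0.
have [close_b large] := closing ba.
have a_lt_b : (a < b)%N by rewrite ltn_neqAle eq_sym ba.
exists r.+1, (push_chain r k b); split; first exact: k0.
  move=> i ir; have /andP[-> k_le] := push_chain_incr k_incr k_last a_lt_b _ ir.
  exact: leq_trans k_le bN.
rewrite esum_push k_last; have := closed_run_bound s_sign anchor close_b large mono.
lra.
Qed.

End MonotoneRuns.

Section RunningSupGap.
Context {R : realType} {y1 y2 : R -> R}.
Hypotheses (y1_cadlag : cadlag y1) (y2_cadlag : cadlag y2).
Local Notation Z t := (runsup y1 t - runsup y2 t).
Local Notation D t := (y1 t - y2 t).

Lemma runsup_gap_incr {s t e} : 0 <= s -> s <= t -> 0 < e -> Z s < Z t ->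
  exists u, s < u <= t /\ Z t - e < D u.
Proof.
move=> s0 st e0 gap_lt.
have M1_lt : runsup y1 s < runsup y1 t.
  by have := runsup_le y2_cadlag s0 st; lra.
have [u [/andP[su ut] y1u]] := runsup_lt_approx y1_cadlag s0 st e0 M1_lt.
have y2u : y2 u <= runsup y2 t by apply: runsup_ub => //; rewrite ut (le_trans s0) ?ltW.
by exists u; split; [rewrite su | lra].
Qed.

End RunningSupGap.

Section RunningSupGapVariation.
Context {R : realType} {y1 y2 : R -> R}.
Hypotheses (y1_cadlag : cadlag y1) (y2_cadlag : cadlag y2).
Local Notation Z t := (runsup y1 t - runsup y2 t).
Local Notation D t := (y1 t - y2 t).

Lemma runsup_gap_witnesses {T n t e} : subdivision 0 T n t -> 0 < e ->
  exists2 q : nat -> R, q 0%N = 0 & forall j, (j < n)%N ->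
    [/\ t j < q j.+1 <= t j.+1,
        Z (t j) < Z (t j.+1) -> Z (t j.+1) - D (q j.+1) <= e &
        Z (t j.+1) < Z (t j) -> D (q j.+1) - Z (t j.+1) <= e].
Proof.
move=> sub e0; have [t0 [_ t_lt]] := sub.
have /choice[f f_witness] : forall j, exists u, (j < n)%N ->
    [/\ t j < u <= t j.+1,
        Z (t j) < Z (t j.+1) -> Z (t j.+1) - D u <= e &
        Z (t j.+1) < Z (t j) -> D u - Z (t j.+1) <= e]; last first.
  by exists (fun j => if j is j'.+1 then f j' else 0).
move=> j; have [jn|] := ltnP j n; last by exists 0.
have tj0 : 0 <= t j by rewrite -t0; apply: (subdivision_le sub); rewrite leq0n ltnW.
have tj_lt := t_lt _ jn.
case: (ltgtP (Z (t j)) (Z (t j.+1))) => [up|down|flat].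
- have [u [/andP[tju ut] Du]] := runsup_gap_incr y1_cadlag y2_cadlag tj0 (ltW tj_lt) e0 up.
  by exists u => _; split; [rewrite tju | lra | lra].
- have down' : runsup y2 (t j) - runsup y1 (t j) < runsup y2 (t j.+1) - runsup y1 (t j.+1).
    lra.
  have [u [/andP[tju ut] Du]] := runsup_gap_incr y2_cadlag y1_cadlag tj0 (ltW tj_lt) e0 down'.
  by exists u => _; split; [rewrite tju | lra | lra].
- by exists (t j.+1) => _; split; [rewrite tj_lt lexx | lra | lra].
Qed.

Lemma runsup_gap_sum_le_pvar p T n t c : 1 <= p -> subdivision 0 T n t -> 0 <= c < 1 ->
  ((c `^ p * \sum_(j < n) `|Z (t j.+1) - Z (t j)| `^ p)%:E <= pvar p (fun s => D s) 0 T)%E.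
Proof.
move=> p_ge1 sub /andP[c0 c1]; have [t0 [tn _]] := sub.
have [m m0 m_le] := @exists_lb_nonzero_norm _ n (fun j => Z (t j.+1) - Z (t j)).
pose eps := (1 - c) * m / 2.
have eps0 : 0 < eps by rewrite divr_gt0 // mulr_gt0 // subr_gt0.
have [q q0 q_spec] := runsup_gap_witnesses sub eps0.
have step_large j : (j < n)%N -> Z (t j.+1) != Z (t j) ->
    2 * eps <= (1 - c) * `|Z (t j.+1) - Z (t j)|.
  move=> jn; rewrite -subr_eq0 => /(m_le _ jn) le_m.
  by rewrite mulrC divfK ?pnatr_eq0 // ler_wpM2l // subr_ge0 ltW.
have start_close : `|D (q 0%N) - Z (t 0%N)| <= eps.
  by rewrite q0 t0 !runsup0 subrr normr0 ltW.
have [r [k [k0 k_incr dominated]]] := @exists_dominated_subchain _ p c eps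
  (fun j => Z (t j)) (fun j => D (q j)) n p_ge1 c0 (ltW c1) step_large start_close
  (fun j jn => let: And3 _ up _ := q_spec j jn in up)
  (fun j jn => let: And3 _ _ down := q_spec j jn in down).
have q_le_t i : (i <= n)%N -> q i <= t i.
  by case: i => [_|i /q_spec[/andP[]]]; rewrite ?q0 ?t0.
have q_incr i j : (i < j <= n)%N -> q i < q j.
  case: j => [//|j] /andP[ij jn]; have [/andP[tq _] _ _] := q_spec j jn.
  have t_le : t i <= t j by apply: (subdivision_le sub); rewrite -ltnS ij ltnW.
  have := q_le_t i (ltnW (leq_trans ij jn)); lra.
have kr_le : (k r <= n)%N.
  by case: r k_incr {dominated} => [_|r /(_ r (ltnSn r))/andP[]]; rewrite ?k0.
apply: le_trans (@sum_le_pvar _ p (fun s => D s) 0 T r (fun i => q (k i)) _ _ _).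
  by rewrite lee_fin.
- by rewrite /= k0 q0.
- by move=> i /k_incr/andP[k_lt k_le]; apply: q_incr; rewrite k_lt.
- have t_le : t (k r) <= t n by apply: (subdivision_le sub); rewrite kr_le leqnn.
  by have := q_le_t _ kr_le; rewrite /= -tn; lra.
Qed.

End RunningSupGapVariation.

Theorem theorem1 (R : realType) (p : R) (hp : 1 <= p)
  (y1 y2 : R -> R) (hy1 : cadlag y1) (hy2 : cadlag y2) (T : R) (hT : 0 <= T) :
  (pvarT p (fun t => (runsup y1 t - runsup y2 t)%R) T <= pvarT p (fun t => (y1 t - y2 t)%R) T)%E.
Proof.
apply: ge_ereal_sup => _ [n [t [sub ->]]].
apply: lee_powR_scale (lt_le_trans ltr01 hp) _ _ => [|c c01].
  by apply: sumr_ge0 => i _; apply: powR_ge0.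
exact: runsup_gap_sum_le_pvar.
Qed.
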